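(* In the setting of an economy of $N$ companies as described in the context, under the purely intermediated market scheme with $\tau$ and $\lambda$ chosen so that aggregate emissions equal $A$ under both schemes, the GDP satisfies $$\mathrm{GDP}^{\mathrm{mar}}=\mathrm{GDP}^{\mathrm{tax}}+\tfrac12\Big(\tfrac{A^2}{\varrho}-\sum_i\tfrac{(\mathrm{E}^{\mathrm{mar}}_i)^2}{\varrho_i}\Big),\quad\text{where}\quad \tfrac{A^2}{\varrho}-\sum_i\tfrac{(\mathrm{E}^{\mathrm{mar}}_i)^2}{\varrho_i}\le0.$$ Moreover, $$\mathcal{W}^{\mathrm{mar}}_{\mathrm{C}}+\mathcal{W}^{\mathrm{mar}}_{\mathrm{R}}=\mathcal{W}^{\mathrm{tax}}_{\mathrm{C}}+\mathcal{W}^{\mathrm{tax}}_{\mathrm{R}}+\tfrac32\Big(\tfrac{A^2}{\varrho}-\sum_i\tfrac{(\mathrm{E}^{\mathrm{mar}}_i)^2}{\varrho_i}\Big)-\tfrac{A^2}{\varrho},$$ where the last two terms together are $<0$, so the combined wealth of companies and regulator is lower under the market scheme.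
   Context: Economy of $N$ companies indexed by $i$, with $\pi^0_i,\pi^1_i,\gamma_i>0$, $\mathrm{E}^{\mathrm{bau}}_i=\pi^0_i/\pi^1_i$, $\varrho_i=1/\pi^1_i+1/\gamma_i$, $\mathrm{E}^{\mathrm{bau}}=\sum_i\mathrm{E}^{\mathrm{bau}}_i$, $\varrho=\sum_i\varrho_i$; $A>0$ certificates are auctioned, $\lambda>0$ is the penalty and $\tau>0$ the tax rate, with $\tau\varrho_i<\mathrm{E}^{\mathrm{bau}}_i$, $\lambda\varrho_i<\mathrm{E}^{\mathrm{bau}}_i$, and $\tfrac12[\mathrm{E}^{\mathrm{bau}}+\varrho(\max_i(\mathrm{E}^{\mathrm{bau}}_i/\varrho_i)-2\lambda)]\le A<\sum_i[(\mathrm{E}^{\mathrm{bau}}_i/2)\vee(\mathrm{E}^{\mathrm{bau}}_i-\lambda\varrho_i)]$. Company $i$ has raw wealth $\pi_i(q)=\pi^0_iq-\tfrac{\pi^1_i}{2}q^2$, emissions $e^{-a}q$ with green effort $a$ at cost $\tfrac{\gamma_i}{2}[(1-e^{-a})q]^2$. Tax scheme: company maximizes $\pi_i(q)-c_i(q,a)-\tau e^{-a}q$; its optimal wealth is $\mathcal{W}^{\mathrm{tax}}_{\mathrm{C},i}$ and the regulator collects $\mathcal{W}^{\mathrm{tax}}_{\mathrm{R}}=\tau\sum_i\mathrm{E}^{\mathrm{tax}}_i$. Market scheme: company facing price $P$ maximizes $\pi_i(q)-c_i(q,a)-\delta P-\lambda(e^{-a}q-\delta)^+$ over $(q,a,\delta)$,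 with optimal demand $\delta_i(P)=\mathrm{E}^{\mathrm{bau}}_i-P\varrho_i$, emissions $\mathrm{E}^{\mathrm{mar}}_i$ and wealth $\mathcal{W}^{\mathrm{mar}}_{\mathrm{C},i}$. Purely intermediated: each company buys from its intermediary, which buys at spot price $S$ and sets $\bm{P_i}(S)=\arg\max_{P\in[S,\lambda]}\delta_i(P)(P-S)$, earning $\mathcal{W}^{\mathrm{mar}}_{\mathrm{F},i}=\delta_i(\bm{P_i})(\bm{P_i}-S)$; equilibrium $\bm S$ solves $A=\sum_i\delta_i(\bm{P_i}(\bm S))$; regulator earns $\mathcal{W}^{\mathrm{mar}}_{\mathrm{R}}=\lambda\sum_i(\mathrm{E}^{\mathrm{mar}}_i-\bm{\delta_i})^++\bm SA$. Aggregates are sums over $i$. $\mathrm{GDP}^{\cdot}=\mathcal{W}^{\cdot}_{\mathrm{C}}+\mathcal{W}^{\cdot}_{\mathrm{F}}+\mathcal{W}^{\cdot}_{\mathrm{R}}$, with $\mathcal{W}^{\mathrm{tax}}_{\mathrm{F}}=0$. *)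

From HB Require Import structures.
From mathcomp Require Import all_boot all_order all_algebra.
From mathcomp Require Import all_classical all_reals all_analysis.
Set Implicit Arguments. Unset Strict Implicit. Unset Printing Implicit Defensive.
Import Order.TTheory GRing.Theory Num.Theory.
Local Open Scope ring_scope.

Definition Ebau {R : realType} {N : nat} (pi0 pi1 : 'I_N -> R) (i : 'I_N) : R :=
  pi0 i / pi1 i.

Definition rho {R : realType} {N : nat} (pi1 gam : 'I_N -> R) (i : 'I_N) : R :=
  (pi1 i)^-1 + (gam i)^-1.

Definition Ebau_tot {R : realType} {N : nat} (pi0 pi1 : 'I_N -> R) : R :=
  \sum_(i < N) Ebau pi0 pi1 i.

Definition rho_tot {R : realType} {N : nat} (pi1 gam : 'I_N -> R) : R :=
  \sum_(i < N) rho pi1 gam i.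

(* max_i (E^bau_i / rho_i); all these ratios are positive under the
   standing assumptions, so 0 as neutral element is harmless. *)
Definition max_ratio {R : realType} {N : nat} (pi0 pi1 gam : 'I_N -> R) : R :=
  \big[Num.max/0]_(i < N) (Ebau pi0 pi1 i / rho pi1 gam i).

Definition raw_wealth {R : realType} {N : nat} (pi0 pi1 : 'I_N -> R)
  (i : 'I_N) (q : R) : R := pi0 i * q - pi1 i / 2 * q ^+ 2.

Definition emission {R : realType} (q a : R) : R := expR (- a) * q.

Definition green_cost {R : realType} {N : nat} (gam : 'I_N -> R)
  (i : 'I_N) (q a : R) : R := gam i / 2 * ((1 - expR (- a)) * q) ^+ 2.

Definition tax_obj {R : realType} {N : nat} (pi0 pi1 gam : 'I_N -> R) (tau : R)
  (i : 'I_N) (q a : R) : R :=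
  raw_wealth pi0 pi1 i q - green_cost gam i q a - tau * emission q a.

Definition tax_optimal {R : realType} {N : nat} (pi0 pi1 gam : 'I_N -> R) (tau : R)
  (i : 'I_N) (q a : R) : Prop :=
  0 <= q /\ 0 <= a /\
  forall q' a', 0 <= q' -> 0 <= a' ->
    tax_obj pi0 pi1 gam tau i q' a' <= tax_obj pi0 pi1 gam tau i q a.

Definition mar_obj {R : realType} {N : nat} (pi0 pi1 gam : 'I_N -> R) (lambda P : R)
  (i : 'I_N) (q a d : R) : R :=
  raw_wealth pi0 pi1 i q - green_cost gam i q a - d * P
  - lambda * Num.max (emission q a - d) 0.

Definition mar_optimal {R : realType} {N : nat} (pi0 pi1 gam : 'I_N -> R) (lambda P : R)
  (i : 'I_N) (q a d : R) : Prop :=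
  0 <= q /\ 0 <= a /\ 0 <= d /\
  forall q' a' d', 0 <= q' -> 0 <= a' -> 0 <= d' ->
    mar_obj pi0 pi1 gam lambda P i q' a' d' <= mar_obj pi0 pi1 gam lambda P i q a d.

Definition demand {R : realType} {N : nat} (pi0 pi1 gam : 'I_N -> R)
  (i : 'I_N) (P : R) : R := Ebau pi0 pi1 i - P * rho pi1 gam i.

Definition intermediary_price {R : realType} {N : nat} (pi0 pi1 gam : 'I_N -> R)
  (lambda S : R) (i : 'I_N) (P : R) : Prop :=
  S <= P <= lambda /\
  forall P', S <= P' <= lambda ->
    demand pi0 pi1 gam i P' * (P' - S) <= demand pi0 pi1 gam i P * (P - S).

Definition clears_market {R : realType} {N : nat} (pi0 pi1 gam : 'I_N -> R)
  (lambda A S : R) : Prop :=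
  exists Pv : 'I_N -> R,
    (forall i, intermediary_price pi0 pi1 gam lambda S i (Pv i)) /\
    \sum_(i < N) demand pi0 pi1 gam i (Pv i) = A.

Definition equilibrium_spot {R : realType} {N : nat} (pi0 pi1 gam : 'I_N -> R)
  (lambda A S : R) : Prop :=
  clears_market pi0 pi1 gam lambda A S /\
  forall S', clears_market pi0 pi1 gam lambda A S' -> S' = S.

From Pilot Require Import Defs.
From mathcomp Require Import all_boot all_order all_algebra.
From mathcomp Require Import all_classical all_reals all_analysis.
From mathcomp Require Import lra ring.
Set Implicit Arguments. Unset Strict Implicit. Unset Printing Implicit Defensive.
Import Order.TTheory GRing.Theory Num.Theory.
Local Open Scope ring_scope.

(* A company facing a carbon price p, whether a tax or the price charged by
   its intermediary, ends up emitting demand_i p = E^bau_i - p rho_i, and its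
   wealth plus the price paid for these emissions is
   welfare_i e = pi0_i^2 / (2 pi1_i) - (E^bau_i - e)^2 / (2 rho_i).
   All payments between companies, intermediaries and regulator cancel in the
   GDP, so both GDPs are sums of welfare_i over the emissions.  A uniform tax
   spreads the abatement E^bau - A efficiently, at total cost
   (E^bau - A)^2 / (2 rho); each intermediary instead charges its monopoly
   price (E^bau_i / rho_i + S) / 2, and the resulting misallocation costs
   sum_i (E_i - A rho_i / rho)^2 / (2 rho_i) = - D / 2 on top.  Subtracting
   the intermediaries' margins sum_i E_i^2 / rho_i gives the second identity. *)

Lemma sum_sqr_div_decomp (F : fieldType) (I : finType) (y r : I -> F) :
  (forall i, r i != 0) ->
  \sum_i y i ^+ 2 / r i = (\sum_i y i) ^+ 2 / \sum_i r i
    + \sum_i (y i - (\sum_j y j) / (\sum_j r j) * r i) ^+ 2 / r i.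
Proof.
move=> r_neq0; set Y := \sum_j y j; set rs := \sum_j r j; set k := Y / rs.
have expand i :
    (y i - k * r i) ^+ 2 / r i = y i ^+ 2 / r i - 2 * k * y i + k ^+ 2 * r i.
  by field; exact: r_neq0.
rewrite (eq_bigr _ (fun i _ => expand i)) big_split sumrB /= -!mulr_sumr -/Y -/rs.
have [rs0|rs_neq0] := eqVneq rs 0.
  by rewrite /k rs0 invr0 !(mulr0, mul0r) subr0 !(add0r, addr0).
by rewrite /k; field.
Qed.

Lemma sqr_sum_div_le (F : realFieldType) (I : finType) (y r : I -> F) :
  (forall i, 0 < r i) -> (\sum_i y i) ^+ 2 / \sum_i r i <= \sum_i y i ^+ 2 / r i.
Proof.
move=> r_gt0; rewrite (sum_sqr_div_decomp y (fun i => lt0r_neq0 (r_gt0 i))) lerDl.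
by apply: sumr_ge0 => i _; rewrite divr_ge0 ?sqr_ge0 ?ltW.
Qed.

Lemma half_mul_sqr_ge0 (F : realFieldType) (c x : F) : 0 < c -> 0 <= c / 2 * x ^+ 2.
Proof. by move=> c_gt0; rewrite mulr_ge0 ?sqr_ge0 ?divr_ge0 ?ltW. Qed.

Lemma half_mul_sqr_eq0 (F : realFieldType) (c x : F) :
  0 < c -> (c / 2 * x ^+ 2 == 0) = (x == 0).
Proof. by move=> c_gt0; rewrite mulf_eq0 sqrf_eq0 mulf_eq0 invr_eq0 pnatr_eq0 gt_eqF. Qed.

Definition welfare {R : realType} {N : nat} (pi0 pi1 gam : 'I_N -> R)
  (i : 'I_N) (e : R) : R :=
  pi0 i ^+ 2 / (2 * pi1 i) - (Ebau pi0 pi1 i - e) ^+ 2 / (2 * rho pi1 gam i).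

Definition monopoly_price {R : realType} {N : nat} (pi0 pi1 gam : 'I_N -> R)
  (S : R) (i : 'I_N) : R :=
  (Ebau pi0 pi1 i / rho pi1 gam i + S) / 2.

Definition clearing_spot {R : realType} {N : nat} (pi0 pi1 gam : 'I_N -> R)
  (A : R) : R :=
  (Ebau_tot pi0 pi1 - 2 * A) / rho_tot pi1 gam.

Section Economy.
Context {R : realType} {N : nat} { pi0 pi1 gam : 'I_N -> R }.
Hypotheses (pi1_gt0 : forall i, 0 < pi1 i) (gam_gt0 : forall i, 0 < gam i).

Local Notation Ebau := (Ebau pi0 pi1).
Local Notation rho := (rho pi1 gam).
Local Notation Ebau_tot := (Ebau_tot pi0 pi1).
Local Notation rho_tot := (rho_tot pi1 gam).
Local Notation demand := (demand pi0 pi1 gam).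
Local Notation tax_obj := (tax_obj pi0 pi1 gam).
Local Notation tax_optimal := (tax_optimal pi0 pi1 gam).
Local Notation mar_obj := (mar_obj pi0 pi1 gam).
Local Notation mar_optimal := (mar_optimal pi0 pi1 gam).
Local Notation welfare := (welfare pi0 pi1 gam).
Local Notation monopoly_price := (monopoly_price pi0 pi1 gam).
Local Notation clearing_spot := (clearing_spot pi0 pi1 gam).

Lemma rho_gt0 i : 0 < rho i.
Proof. by rewrite addr_gt0 ?invr_gt0. Qed.

Lemma rho_tot_gt0 : (0 < N)%N -> 0 < rho_tot.
Proof.
move=> N_gt0; rewrite /Defs.rho_tot (bigD1 (Ordinal N_gt0)) //=.
apply: lt_le_trans (rho_gt0 (Ordinal N_gt0)) _; rewrite lerDl sumr_ge0 // => i _.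
exact/ltW/rho_gt0.
Qed.

Lemma tax_objE (p : R) i (q a : R) : tax_obj p i q a =
  welfare i (demand i p) - p * demand i p
  - (pi1 i / 2 * (q - (pi0 i - p) / pi1 i) ^+ 2
     + gam i / 2 * (q - emission q a - p / gam i) ^+ 2).
Proof.
rewrite /tax_obj /raw_wealth /green_cost /emission /welfare /demand /Defs.Ebau /Defs.rho.
by field; rewrite !lt0r_neq0 ?addr_gt0.
Qed.

Lemma tax_obj_le (p : R) i (q a : R) :
  tax_obj p i q a <= welfare i (demand i p) - p * demand i p.
Proof. by rewrite tax_objE gerBl addr_ge0 ?half_mul_sqr_ge0. Qed.

Lemma tax_obj_max_emission (p : R) i (q a : R) :
  welfare i (demand i p) - p * demand i p <= tax_obj p i q a ->
  emission q a = demand i p.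
Proof.
rewrite tax_objE lerBrDl gerDr => gaps_le0.
have /eqP : pi1 i / 2 * (q - (pi0 i - p) / pi1 i) ^+ 2
    + gam i / 2 * (q - emission q a - p / gam i) ^+ 2 = 0.
  by apply/le_anti; rewrite gaps_le0 addr_ge0 ?half_mul_sqr_ge0.
rewrite paddr_eq0 ?half_mul_sqr_ge0 // !half_mul_sqr_eq0 // !subr_eq0.
case/andP=> /eqP q_eq /eqP e_eq.
rewrite -[emission q a](addrNK q) -opprB e_eq q_eq /demand /Defs.Ebau /Defs.rho.
by field; rewrite !lt0r_neq0.
Qed.

Lemma tax_obj_max_attained (p : R) i : 0 <= p -> p * rho i < Ebau i ->
  exists q a, [/\ 0 <= q, 0 <= a &
    tax_obj p i q a = welfare i (demand i p) - p * demand i p].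
Proof.
move=> p_ge0 lt_Ebau; set e := demand i p; set q := (pi0 i - p) / pi1 i.
have e_gt0 : 0 < e by rewrite subr_gt0.
have q_sub_e : q - e = p / gam i.
  by rewrite /q /e /demand /Defs.Ebau /Defs.rho; field; rewrite !lt0r_neq0.
have e_le_q : e <= q by rewrite -subr_ge0 q_sub_e divr_ge0 // ltW.
have q_gt0 : 0 < q := lt_le_trans e_gt0 e_le_q.
have emission_e : emission q (ln (q / e)) = e.
  have qe_pos : q / e \in Num.pos by rewrite posrE divr_gt0.
  by rewrite /emission expRN lnK // invf_div divfK // lt0r_neq0.
exists q, (ln (q / e)); split; first exact: ltW.
  by rewrite ln_ge0 // ler_pdivlMr // mul1r.
by rewrite tax_objE emission_e q_sub_e !subrr expr0n /= !mulr0 addr0 subr0.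
Qed.

Lemma tax_optimalE (p : R) i (q a : R) :
  0 <= p -> p * rho i < Ebau i -> tax_optimal p i q a ->
  emission q a = demand i p /\
  tax_obj p i q a = welfare i (demand i p) - p * demand i p.
Proof.
move=> p_ge0 lt_Ebau [_ [_ opt]].
have [q' [a' [q'_ge0 a'_ge0 max_eq]]] := tax_obj_max_attained p_ge0 lt_Ebau.
have := opt _ _ q'_ge0 a'_ge0; rewrite max_eq => max_le.
by split; [exact: tax_obj_max_emission | apply/le_anti; rewrite tax_obj_le].
Qed.

Lemma mar_obj_emission (lambda p : R) i (q a : R) :
  mar_obj lambda p i q a (emission q a) = tax_obj p i q a.
Proof. by rewrite /mar_obj /Defs.tax_obj subrr maxxx mulr0 subr0 [_ * p]mulrC. Qed.

Lemma mar_obj_le_tax_obj (lambda p : R) i (q a d : R) : 0 <= p <= lambda ->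
  mar_obj lambda p i q a d <= tax_obj p i q a.
Proof.
case/andP=> p_ge0 p_le; rewrite /mar_obj /Defs.tax_obj.
set e := emission q a; set m := Num.max (e - d) 0.
have m_ge : e - d <= m by rewrite le_max lexx.
have m_ge0 : 0 <= m by rewrite le_max lexx orbT.
nra.
Qed.

(* Otherwise buying one more certificate would pay off. *)
Lemma mar_optimal_price_ge0 (lambda p : R) i (q a d : R) : 0 <= lambda ->
  mar_optimal lambda p i q a d -> 0 <= p.
Proof.
move=> lambda_ge0 [q_ge0 [a_ge0 [d_ge0 opt]]].
have := opt q a (d + 1) q_ge0 a_ge0 (addr_ge0 d_ge0 ler01).
rewrite /mar_obj; set e := emission q a; set m := Num.max (e - d) 0.
have m_ge : e - d <= m by rewrite le_max lexx.
have m_ge0 : 0 <= m by rewrite le_max lexx orbT.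
have m1_le : Num.max (e - (d + 1)) 0 <= m by rewrite ge_max m_ge0 andbT; lra.
nra.
Qed.

Lemma mar_optimal_tax_optimal (lambda p : R) i (q a d : R) :
  0 <= lambda -> p <= lambda ->
  mar_optimal lambda p i q a d -> tax_optimal p i q a.
Proof.
move=> lambda_ge0 p_le opt; have p_ge0 := mar_optimal_price_ge0 lambda_ge0 opt.
case: opt => q_ge0 [a_ge0 [_ opt]]; do 2!split=> //; move=> q' a' q'_ge0 a'_ge0.
have e'_ge0 : 0 <= emission q' a' by rewrite mulr_ge0 ?expR_ge0.
rewrite -(mar_obj_emission lambda); apply: le_trans (opt _ _ _ q'_ge0 a'_ge0 e'_ge0) _.
by apply: mar_obj_le_tax_obj; rewrite p_ge0.
Qed.

Lemma mar_optimalE (lambda p : R) i (q a : R) : 0 <= lambda -> p <= lambda ->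
  lambda * rho i < Ebau i -> mar_optimal lambda p i q a (demand i p) ->
  emission q a = demand i p /\
  mar_obj lambda p i q a (demand i p) = welfare i (demand i p) - p * demand i p.
Proof.
move=> lambda_ge0 p_le lt_Ebau opt.
have p_ge0 := mar_optimal_price_ge0 lambda_ge0 opt.
have p_lt : p * rho i < Ebau i.
  exact: le_lt_trans (ler_wpM2r (ltW (rho_gt0 i)) p_le) lt_Ebau.
have [e_eq obj_eq] :=
  tax_optimalE p_ge0 p_lt (mar_optimal_tax_optimal lambda_ge0 p_le opt).
by rewrite -[X in mar_obj _ _ _ _ _ X]e_eq mar_obj_emission.
Qed.

Lemma demand_monopoly_price (S : R) i :
  demand i (monopoly_price S i) = (Ebau i - S * rho i) / 2.
Proof.
by rewrite /demand /monopoly_price; field; rewrite lt0r_neq0 ?rho_gt0.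
Qed.

Lemma monopoly_price_margin (S : R) i :
  monopoly_price S i - S = demand i (monopoly_price S i) / rho i.
Proof.
by rewrite demand_monopoly_price /monopoly_price; field; rewrite lt0r_neq0 ?rho_gt0.
Qed.

Lemma demand_margin_square (S : R) i (P : R) : demand i P * (P - S) =
  rho i * ((monopoly_price S i - S) ^+ 2 - (P - monopoly_price S i) ^+ 2).
Proof.
by rewrite /demand /monopoly_price; field; rewrite lt0r_neq0 ?rho_gt0.
Qed.

Lemma intermediary_priceP (lambda S : R) i (P : R) :
  S <= monopoly_price S i <= lambda ->
  intermediary_price pi0 pi1 gam lambda S i P <-> P = monopoly_price S i.
Proof.
move=> range; set m := monopoly_price S i.
have margin_le P' : demand i P' * (P' - S) <= demand i m * (m - S).
  rewrite !demand_margin_square subrr expr0n /= subr0 ler_pM2l ?rho_gt0 //.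
  by rewrite gerBl sqr_ge0.
split=> [[_ /(_ _ range)] | ->]; last by split=> // P' _; exact: margin_le.
rewrite !demand_margin_square subrr expr0n /= subr0 ler_pM2l ?rho_gt0 // lerBrDl gerDr.
by move=> sqr_le0; apply/eqP; rewrite -subr_eq0 -sqrf_eq0 eq_le sqr_le0 sqr_ge0.
Qed.

Lemma sum_demand_monopoly_price (S : R) :
  \sum_i demand i (monopoly_price S i) = (Ebau_tot - S * rho_tot) / 2.
Proof.
rewrite (eq_bigr _ (fun i _ => demand_monopoly_price S i)) -mulr_suml.
by rewrite sumrB -mulr_sumr.
Qed.

Lemma sum_welfare (E : 'I_N -> R) :
  \sum_i welfare i (E i) = \sum_i pi0 i ^+ 2 / (2 * pi1 i)
    - ((Ebau_tot - \sum_i E i) ^+ 2 / rho_tot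
       + \sum_i (Ebau i - E i - (Ebau_tot - \sum_j E j) / rho_tot * rho i) ^+ 2
           / rho i) / 2.
Proof.
have rho_neq0 i : rho i != 0 := lt0r_neq0 (rho_gt0 i).
rewrite /welfare sumrB; congr (_ - _).
transitivity ((\sum_i (Ebau i - E i) ^+ 2 / rho i) / 2).
  by rewrite mulr_suml; apply: eq_bigr => i _; field.
by rewrite (sum_sqr_div_decomp (fun i => Ebau i - E i)) //= sumrB.
Qed.

Section AggregateWelfare.
Variable E : 'I_N -> R.
Hypothesis N_gt0 : (0 < N)%N.

Let rho_tot_neq0 : rho_tot != 0 := lt0r_neq0 (rho_tot_gt0 N_gt0).

Lemma sum_welfare_uniform_price (tau : R) : (forall i, E i = demand i tau) ->
  \sum_i welfare i (E i) =
    \sum_i pi0 i ^+ 2 / (2 * pi1 i) - (Ebau_tot - \sum_i E i) ^+ 2 / rho_tot / 2.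
Proof.
move=> E_eq; have tau_eq : (Ebau_tot - \sum_i E i) / rho_tot = tau.
  rewrite (eq_bigr _ (fun i _ => E_eq i)) sumrB -mulr_sumr.
  by rewrite -/(Defs.Ebau_tot pi0 pi1) -/(Defs.rho_tot pi1 gam); field.
have misallocation0 : \sum_i (Ebau i - E i - tau * rho i) ^+ 2 / rho i = 0.
  apply: big1 => i _; suff -> : Ebau i - E i - tau * rho i = 0 by rewrite expr0n mul0r.
  by rewrite E_eq /demand; ring.
by rewrite sum_welfare tau_eq misallocation0 addr0.
Qed.

Lemma sum_welfare_monopoly_price (S : R) :
  (forall i, E i = demand i (monopoly_price S i)) ->
  \sum_i welfare i (E i) = \sum_i pi0 i ^+ 2 / (2 * pi1 i)
    - ((Ebau_tot - \sum_i E i) ^+ 2 / rho_tot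
       + (\sum_i E i ^+ 2 / rho i - (\sum_i E i) ^+ 2 / rho_tot)) / 2.
Proof.
move=> E_eq; have rho_neq0 i : rho i != 0 := lt0r_neq0 (rho_gt0 i).
have Ebau_totE : Ebau_tot = 2 * \sum_i E i + S * rho_tot.
  by rewrite (eq_bigr _ (fun i _ => E_eq i)) sum_demand_monopoly_price; field.
rewrite sum_welfare (sum_sqr_div_decomp E rho_neq0) addrAC subrr add0r.
congr (_ - (_ + _) / 2); apply: eq_bigr => i _; congr (_ ^+ 2 / _).
by rewrite Ebau_totE E_eq demand_monopoly_price /Defs.rho_tot; field.
Qed.

End AggregateWelfare.

Section TaxScheme.
Variables (tau : R) (qt at_ : 'I_N -> R).
Hypotheses (tau_ge0 : 0 <= tau) (tau_lt : forall i, tau * rho i < Ebau i)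
  (qt_opt : forall i, tax_optimal tau i (qt i) (at_ i)).

Lemma tax_emissionE i : emission (qt i) (at_ i) = demand i tau.
Proof. exact: (tax_optimalE tau_ge0 (tau_lt i) (qt_opt i)).1. Qed.

Lemma tax_gdp : \sum_i tax_obj tau i (qt i) (at_ i) + tau * \sum_i emission (qt i) (at_ i)
  = \sum_i welfare i (emission (qt i) (at_ i)).
Proof.
rewrite mulr_sumr -big_split; apply: eq_bigr => i _ /=.
by rewrite (tax_optimalE tau_ge0 (tau_lt i) (qt_opt i)).2 tax_emissionE subrK.
Qed.

End TaxScheme.

Section IntermediatedMarket.
Variables (lambda A : R).
Hypotheses (N_gt0 : (0 < N)%N) (lambda_lt : forall i, lambda * rho i < Ebau i)
  (A_ge : (Ebau_tot + rho_tot * (max_ratio pi0 pi1 gam - 2 * lambda)) / 2 <= A).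

Lemma monopoly_price_clearing_spot i :
  clearing_spot A <= monopoly_price (clearing_spot A) i <= lambda.
Proof.
have rho_tot_pos := rho_tot_gt0 N_gt0.
have spot_le : clearing_spot A <= 2 * lambda - max_ratio pi0 pi1 gam.
  rewrite /clearing_spot ler_pdivrMr //.
  by move: A_ge; rewrite ler_pdivrMr //; nra.
have ratio_le : Ebau i / rho i <= max_ratio pi0 pi1 gam by exact: le_bigmax.
have lambda_lt_ratio : lambda < Ebau i / rho i by rewrite ltr_pdivlMr ?rho_gt0.
by rewrite /monopoly_price; apply/andP; split; lra.
Qed.

Lemma sum_demand_clearing_spot :
  \sum_i demand i (monopoly_price (clearing_spot A) i) = A.
Proof.
rewrite sum_demand_monopoly_price /clearing_spot.
by field; exact/lt0r_neq0/rho_tot_gt0.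
Qed.

Lemma equilibrium_spotE S :
  equilibrium_spot pi0 pi1 gam lambda A S -> S = clearing_spot A.
Proof.
case=> _ unique; apply/esym/unique; exists (monopoly_price (clearing_spot A)).
split; last exact: sum_demand_clearing_spot.
by move=> i; apply/(intermediary_priceP _ (monopoly_price_clearing_spot i)).
Qed.

Variables (S : R) (P qm am : 'I_N -> R).
Hypotheses (lambda_ge0 : 0 <= lambda) (S_eq : equilibrium_spot pi0 pi1 gam lambda A S)
  (P_opt : forall i, intermediary_price pi0 pi1 gam lambda S i (P i))
  (qm_opt : forall i, mar_optimal lambda (P i) i (qm i) (am i) (demand i (P i))).

Lemma intermediary_priceE i : P i = monopoly_price S i.
Proof.
apply/(intermediary_priceP _ _).1 => //.
by rewrite (equilibrium_spotE S_eq); exact: monopoly_price_clearing_spot.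
Qed.

Let P_le i : P i <= lambda. Proof. by case: (P_opt i) => /andP[]. Qed.

Let market_optimum i := mar_optimalE lambda_ge0 (P_le i) (lambda_lt i) (qm_opt i).

Lemma market_emissionE i : emission (qm i) (am i) = demand i (monopoly_price S i).
Proof. by rewrite -intermediary_priceE; exact: (market_optimum i).1. Qed.

Lemma sum_market_emission : \sum_i emission (qm i) (am i) = A.
Proof.
rewrite (eq_bigr _ (fun i _ => market_emissionE i)) (equilibrium_spotE S_eq).
exact: sum_demand_clearing_spot.
Qed.

Lemma sum_intermediary_margin :
  \sum_i demand i (P i) * (P i - S) = \sum_i emission (qm i) (am i) ^+ 2 / rho i.
Proof.
apply: eq_bigr => i _; rewrite intermediary_priceE monopoly_price_margin.
by rewrite -market_emissionE mulrA.
Qed.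

Lemma market_gdp :
  \sum_i mar_obj lambda (P i) i (qm i) (am i) (demand i (P i))
  + \sum_i demand i (P i) * (P i - S)
  + (lambda * \sum_i Num.max (emission (qm i) (am i) - demand i (P i)) 0 + S * A)
  = \sum_i welfare i (emission (qm i) (am i)).
Proof.
have no_penalty : \sum_i Num.max (emission (qm i) (am i) - demand i (P i)) 0 = 0.
  by apply: big1 => i _; rewrite (market_optimum i).1 subrr maxxx.
rewrite no_penalty mulr0 add0r -sum_market_emission mulr_sumr -!big_split.
by apply: eq_bigr => i _; rewrite /= (market_optimum i).2 (market_optimum i).1; ring.
Qed.

End IntermediatedMarket.

End Economy.

Theorem corollary3p2 (R : realType) (N : nat) (pi0 pi1 gam : 'I_N -> R)
  (A lambda tau : R)
  (hpi0 : forall i, 0 < pi0 i) (hpi1 : forall i, 0 < pi1 i)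
  (hgam : forall i, 0 < gam i)
  (hA : 0 < A) (hlambda : 0 < lambda) (htau : 0 < tau)
  (htau_i : forall i, tau * rho pi1 gam i < Ebau pi0 pi1 i)
  (hlambda_i : forall i, lambda * rho pi1 gam i < Ebau pi0 pi1 i)
  (hA_low : (Ebau_tot pi0 pi1
             + rho_tot pi1 gam * (max_ratio pi0 pi1 gam - 2 * lambda)) / 2 <= A)
  (hA_up : A < \sum_(i < N) Num.max (Ebau pi0 pi1 i / 2)
                                    (Ebau pi0 pi1 i - lambda * rho pi1 gam i))
  (* tax scheme: optimal choices of the companies *)
  (qt at_ : 'I_N -> R)
  (hqt : forall i, tax_optimal pi0 pi1 gam tau i (qt i) (at_ i))
  (* purely intermediated market scheme *)
  (S : R) (hS : equilibrium_spot pi0 pi1 gam lambda A S)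
  (P : 'I_N -> R) (hP : forall i, intermediary_price pi0 pi1 gam lambda S i (P i))
  (qm am : 'I_N -> R)
  (hqm : forall i, mar_optimal pi0 pi1 gam lambda (P i) i (qm i) (am i)
                     (demand pi0 pi1 gam i (P i)))
  (* tau and lambda chosen so that aggregate emissions equal A in both schemes *)
  (hEtax : \sum_(i < N) emission (qt i) (at_ i) = A)
  (hEmar : \sum_(i < N) emission (qm i) (am i) = A) :
  let Etax := fun i => emission (qt i) (at_ i) in
  let Emar := fun i => emission (qm i) (am i) in
  let delta := fun i => demand pi0 pi1 gam i (P i) in
  let WC_tax := \sum_(i < N) tax_obj pi0 pi1 gam tau i (qt i) (at_ i) in
  let WF_tax := 0 in
  let WR_tax := tau * \sum_(i < N) Etax i in
  let GDP_tax := WC_tax + WF_tax + WR_tax in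
  let WC_mar := \sum_(i < N) mar_obj pi0 pi1 gam lambda (P i) i (qm i) (am i) (delta i) in
  let WF_mar := \sum_(i < N) delta i * (P i - S) in
  let WR_mar := lambda * \sum_(i < N) Num.max (Emar i - delta i) 0 + S * A in
  let GDP_mar := WC_mar + WF_mar + WR_mar in
  let D := A ^+ 2 / rho_tot pi1 gam
           - \sum_(i < N) (Emar i) ^+ 2 / rho pi1 gam i in
  [/\ GDP_mar = GDP_tax + D / 2,
      D <= 0,
      WC_mar + WR_mar = WC_tax + WR_tax + 3 / 2 * D - A ^+ 2 / rho_tot pi1 gam,
      3 / 2 * D - A ^+ 2 / rho_tot pi1 gam < 0
    & WC_mar + WR_mar < WC_tax + WR_tax].
Proof.
move=> Etax Emar delta WC_tax WF_tax WR_tax GDP_tax WC_mar WF_mar WR_mar GDP_mar D.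
have N_gt0 : (0 < N)%N.
  case: (posnP N) => [N0|//]; move: hA; rewrite -hEtax big_pred0 ?ltxx // => i.
  by have := ltn_ord i; rewrite [X in (_ < X)%N]N0.
have lambda_ge0 := ltW hlambda; have tau_ge0 := ltW htau.
have GDP_taxE : GDP_tax = \sum_i welfare pi0 pi1 gam i (Etax i).
  by rewrite /GDP_tax /WF_tax addr0; exact: tax_gdp.
have GDP_marE : GDP_mar = \sum_i welfare pi0 pi1 gam i (Emar i) :=
  market_gdp hpi1 hgam N_gt0 hlambda_i hA_low lambda_ge0 hS hP hqm.
have WF_marE : WF_mar = \sum_i Emar i ^+ 2 / rho pi1 gam i :=
  sum_intermediary_margin hpi1 hgam N_gt0 hlambda_i hA_low lambda_ge0 hS hP hqm.
have gap : \sum_i welfare pi0 pi1 gam i (Emar i)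
    = \sum_i welfare pi0 pi1 gam i (Etax i) + D / 2.
  rewrite (sum_welfare_monopoly_price hpi1 hgam N_gt0
            (market_emissionE hpi1 hgam N_gt0 hlambda_i hA_low lambda_ge0 hS hP hqm)).
  rewrite (sum_welfare_uniform_price hpi1 hgam N_gt0
            (tax_emissionE hpi1 hgam tau_ge0 htau_i hqt)).
  by rewrite hEtax hEmar /D; ring.
have D_le0 : D <= 0.
  by rewrite /D subr_le0 -hEmar; exact: sqr_sum_div_le (rho_gt0 hpi1 hgam).
have A2_gt0 : 0 < A ^+ 2 / rho_tot pi1 gam by rewrite divr_gt0 ?exprn_gt0 ?rho_tot_gt0.
have GDP_gap : GDP_mar = GDP_tax + D / 2 by rewrite GDP_marE gap GDP_taxE.
have WCR_gap : WC_mar + WR_mar = WC_tax + WR_tax + 3 / 2 * D - A ^+ 2 / rho_tot pi1 gam.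
  by move: GDP_gap; rewrite /GDP_mar /GDP_tax /WF_tax WF_marE /D; lra.
by split=> //; lra.
Qed.
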